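(* Let $E,A\in\mathbb{R}^{n\times n}$ with $A$ nonsingular and $\mathrm{rank}\,E=r\ge1$, and let $(X,Y)$ be a full rank decomposition of $E$ with $X,Y\in\mathbb{R}^{n\times r}$. (i) If $(E,A)$ has index one, then $Y^T\mathcal{C}(E,A)=\mathbb{R}^r$. (ii) If $(E,A)$ has index two, then $Y^T\mathcal{C}(E,A)=\mathrm{Im}\big((Y^TA^{-1}X)^2\big)$ and this subspace has dimension strictly less than $r$.
   Context: For $E,A\in\mathbb{R}^{n\times n}$ with $A$ nonsingular, $(E,A)$ denotes the descriptor system $E\dot x=Ax$. Its index is the smallest integer $k^*\ge0$ with $\mathrm{Im}((A^{-1}E)^{k^*+1})=\mathrm{Im}((A^{-1}E)^{k^*})$, and its consistency space is $\mathcal{C}(E,A)=\mathrm{Im}((A^{-1}E)^{k^*})$. A full rank decomposition of $E$ is a pair $(X,Y)$ of matrices with full column rank such that $E=XY^T$. *)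

From HB Require Import structures.
From mathcomp Require Import all_boot all_order all_algebra.
Set Implicit Arguments. Unset Strict Implicit. Unset Printing Implicit Defensive.
Import GRing.Theory Num.Theory.
Local Open Scope ring_scope.

(* Column space Im(M) of M : 'M_(m,k), represented (mxalgebra convention:
   row spaces) as the row space of M^T, a subspace of 'rV_m. *)
Definition colspace (R : fieldType) (m k : nat) (M : 'M[R]_(m, k)) : 'M[R]_(k, m) :=
  M^T.

Definition AinvE (R : fieldType) (n : nat) (E A : 'M[R]_n) : 'M[R]_n :=
  invmx A *m E.

Definition im_stable (R : fieldType) (n : nat) (E A : 'M[R]_n) (k : nat) : bool :=
  (colspace (AinvE E A ^+ k.+1) == colspace (AinvE E A ^+ k))%MS.

Definition has_index (R : fieldType) (n : nat) (E A : 'M[R]_n) (k : nat) : Prop :=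
  im_stable E A k /\ forall j, (j < k)%N -> ~~ im_stable E A j.

Definition full_rank_decomp (R : fieldType) (n r : nat)
    (E : 'M[R]_n) (X Y : 'M[R]_(n, r)) : Prop :=
  E = X *m Y^T /\ \rank X = r /\ \rank Y = r.

From HB Require Import structures.
From mathcomp Require Import all_boot all_order all_algebra.
Set Implicit Arguments. Unset Strict Implicit. Unset Printing Implicit Defensive.
Import GRing.Theory Num.Theory.
Local Open Scope ring_scope.

(* With [P := A^-1 X] and [Q := Y^T] we have [A^-1 E = P Q], and the powers of
   the n x n matrix [P Q] are governed by the r x r matrix [M := Q P = Y^T A^-1 X]:
   [Q (P Q)^k = M^k Q] and [(P Q)^(k+1) = P M^k Q].  Since [P] has full column
   rank and [Q] full row rank, [Y^T Im((A^-1 E)^k) = Im(M^k)] and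
   [rank (A^-1 E)^(k+1) = rank M^k].  The index is where these ranks stabilise:
   index one forces [rank M = rank M^0 = r], i.e. [M] is invertible, while index
   two forces [rank M < r], hence [rank M^2 < r]. *)

Section PushThrough.

Variables (F : fieldType) (n r : nat) (P : 'M[F]_(n, r)) (Q : 'M[F]_(r, n)).

Lemma mulmx_exp_swap k : Q *m (P *m Q) ^+ k = (Q *m P) ^+ k *m Q.
Proof.
elim: k => [|k IHk]; first by rewrite !expr0 mulmx1 mul1mx.
by rewrite !exprSr -!mulmxE mulmxA IHk -!mulmxA.
Qed.

Lemma exp_mulmxS k : (P *m Q) ^+ k.+1 = P *m (Q *m P) ^+ k *m Q.
Proof. by rewrite exprS -mulmxE -mulmxA mulmx_exp_swap mulmxA. Qed.

Hypotheses (rankP : \rank P = r) (rankQ : \rank Q = r).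

Lemma mxrank_mulmx_sandwich (B : 'M_r) : \rank (P *m B *m Q) = \rank B.
Proof.
have freeQ : row_free Q by rewrite /row_free rankQ.
have freePT : row_free P^T by rewrite /row_free mxrank_tr rankP.
by rewrite mxrankMfree // -mxrank_tr trmx_mul mxrankMfree // mxrank_tr.
Qed.

Lemma mxrank_exp_mulmxS k : \rank ((P *m Q) ^+ k.+1) = \rank ((Q *m P) ^+ k).
Proof. by rewrite exp_mulmxS mxrank_mulmx_sandwich. Qed.

Lemma colspace_mulmx_exp_swap k :
  (colspace (Q *m (P *m Q) ^+ k) :=: colspace ((Q *m P) ^+ k))%MS.
Proof.
have fullQT : row_full Q^T by rewrite /row_full mxrank_tr rankQ.
by rewrite /colspace mulmx_exp_swap trmx_mul; apply: eqmxMfull.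
Qed.

End PushThrough.

Lemma colspace_exp_succ_sub (F : fieldType) (n : nat) (N : 'M[F]_n) k :
  (colspace (N ^+ k.+1) <= colspace (N ^+ k))%MS.
Proof. by rewrite /colspace exprSr -mulmxE trmx_mul submxMl. Qed.

Lemma im_stableE (F : fieldType) (n : nat) (E A : 'M[F]_n) k :
  im_stable E A k = (\rank (AinvE E A ^+ k.+1) == \rank (AinvE E A ^+ k)).
Proof.
by rewrite /im_stable -(mxrank_leqif_eq (colspace_exp_succ_sub _ k)).2 !mxrank_tr.
Qed.

Theorem mainTheorem10 (R : realFieldType) (n r : nat) (E A : 'M[R]_n)
    (X Y : 'M[R]_(n, r)) :
  A \in unitmx -> \rank E = r -> (1 <= r)%N -> full_rank_decomp E X Y ->
  (has_index E A 1 ->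
     (colspace (Y^T *m AinvE E A ^+ 1) == 1%:M)%MS) /\
  (has_index E A 2 ->
     (colspace (Y^T *m AinvE E A ^+ 2)
        == colspace ((Y^T *m invmx A *m X) ^+ 2))%MS /\
     (\rank (colspace ((Y^T *m invmx A *m X) ^+ 2)) < r)%N).
Proof.
move=> unitA _ _ [defE [rankX rankY]].
have rankP : \rank (invmx A *m X) = r.
  by rewrite eqmxMfull // row_full_unit unitmx_inv.
have rankYT : \rank Y^T = r by rewrite mxrank_tr.
have defN : AinvE E A = invmx A *m X *m Y^T by rewrite /AinvE defE mulmxA.
rewrite -mulmxA defN.
set M := Y^T *m (invmx A *m X).
have rank_step k : \rank ((invmx A *m X *m Y^T) ^+ k.+1) = \rank (M ^+ k).
  exact: mxrank_exp_mulmxS.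
have im_step k : (colspace (Y^T *m (invmx A *m X *m Y^T) ^+ k) :=: colspace (M ^+ k))%MS.
  exact: colspace_mulmx_exp_swap.
split=> [[stable1 _] | [_ unstable]].
  move: stable1; rewrite im_stableE defN !rank_step expr1 expr0 mxrank1 => /eqP rankM.
  apply/eqmxP; apply: eqmx_trans (im_step 1%N) _.
  rewrite expr1; apply/eqmxP/andP; split; first exact: submx1.
  by rewrite sub1mx /row_full mxrank_tr rankM.
have := unstable 1%N isT; rewrite im_stableE defN !rank_step expr1 expr0 mxrank1 => rankM_neq.
split; first by apply/eqmxP; exact: im_step.
have rankM_lt : (\rank M < r)%N by rewrite ltn_neqAle rankM_neq rank_leq_col.
rewrite mxrank_tr expr2 -mulmxE.
exact: leq_ltn_trans (mxrankM_maxr _ _) rankM_lt.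
Qed.
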